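(* Let $(A,\leq,\cdot,/)$ be a right-residuated magma satisfying condition (N). (1) If $(A,\leq)$ has a bottom element $0$, then $0/0$ is the top element of $(A,\leq)$. (2) If $(A,\leq)$ has a top element $\top$, then: (i) $A$ is unital, i.e. $x/x=y/y$ for all $x,y$ (in fact $x/x=\top$ and $\top x = x$ for all $x$); (ii) for all $x,y\in A$, $x\sqcap y\leq x$ and $x\sqcap y\leq y$; (iii) if moreover $A$ is finite, then $(A,\leq)$ has a bottom element.
   Context: Write $xy$ for $x\cdot y$; $\cdot$ binds more strongly than $/$, and $/$ binds more strongly than $\sqcap$, where $x\sqcap y := (x/y)y$. A right-residuated magma is a structure $(A,\leq,\cdot,/)$ where $(A,\leq)$ is a poset and $xy\leq z\iff x\leq z/y$ for all $x,y,z\in A$. Condition (N): for all $x,y\in A$, $x\leq y\iff x = y\sqcap x$. *)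

From Stdlib Require Import List.

Definition is_poset {A : Type} (le : A -> A -> Prop) : Prop :=
  (forall x, le x x) /\
  (forall x y, le x y -> le y x -> x = y) /\
  (forall x y z, le x y -> le y z -> le x z).

Definition right_residuated_magma {A : Type} (le : A -> A -> Prop)
  (mul rdiv : A -> A -> A) : Prop :=
  is_poset le /\ (forall x y z, le (mul x y) z <-> le x (rdiv z y)).

Definition rmeet {A : Type} (mul rdiv : A -> A -> A) (x y : A) : A :=
  mul (rdiv x y) y.

Definition condN {A : Type} (le : A -> A -> Prop) (mul rdiv : A -> A -> A) : Prop :=
  forall x y, le x y <-> x = rmeet mul rdiv y x.

Definition is_bottom {A : Type} (le : A -> A -> Prop) (b : A) : Prop :=
  forall x, le b x.
Definition is_top {A : Type} (le : A -> A -> Prop) (t : A) : Prop :=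
  forall x, le x t.

Definition finite_type (A : Type) : Prop :=
  exists l : list A, forall x : A, In x l.

(* With a top element t, condition (N) applied to x <= t gives x = (t/x) x, and
   t/x = t since t x <= t; hence t x = x.  Then x x <= x yields x/x = t, and
   monotonicity of multiplication turns (x/y) y <= t y into x ⊓ y <= y.  So ⊓ is a
   lower bound operation, and folding it over an enumeration of a finite carrier
   produces a bottom element.  For (1), condition (N) applied to 0 <= x 0 gives
   0 = (x 0 / 0) 0, and x <= x 0 / 0 then yields x 0 <= 0, i.e. x <= 0/0. *)

From Pilot Require Import Defs.
From Stdlib Require Import List.

Section RightResiduatedMagma.

Context {A : Type} {le : A -> A -> Prop} {mul rdiv : A -> A -> A}.
Hypothesis HA : right_residuated_magma le mul rdiv.

Local Notation rmeet := (rmeet mul rdiv).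

Lemma le_refl x : le x x.
Proof. exact (proj1 (proj1 HA) x). Qed.

Lemma le_antisym x y : le x y -> le y x -> x = y.
Proof. exact (proj1 (proj2 (proj1 HA)) x y). Qed.

Lemma le_trans y x z : le x y -> le y z -> le x z.
Proof. exact (proj2 (proj2 (proj1 HA)) x y z). Qed.

Lemma residuation x y z : le (mul x y) z <-> le x (rdiv z y).
Proof. exact (proj2 HA x y z). Qed.

Lemma le_rdiv_mul x y : le x (rdiv (mul x y) y).
Proof. apply residuation, le_refl. Qed.

Lemma mul_le_mono_r y x x' : le x x' -> le (mul x y) (mul x' y).
Proof. intro Hxx'. apply residuation, (le_trans x'); [exact Hxx' | apply le_rdiv_mul]. Qed.

Lemma rmeet_le_l x y : le (rmeet x y) x.
Proof. apply residuation, le_refl. Qed.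

Hypothesis HN : condN le mul rdiv.

Lemma rdiv_bottom_is_top z : is_bottom le z -> is_top le (rdiv z z).
Proof.
  intros Hz x. apply residuation.
  assert (Ez : z = rmeet (mul x z) z) by (apply HN, Hz).
  rewrite Ez at 2. apply mul_le_mono_r, le_rdiv_mul.
Qed.

Section WithTop.

Context {t : A}.
Hypothesis Ht : is_top le t.

Lemma rdiv_top_l x : rdiv t x = t.
Proof. apply le_antisym; [apply Ht | apply residuation, Ht]. Qed.

Lemma mul_top_l x : mul t x = x.
Proof.
  assert (Ex : x = rmeet t x) by (apply HN, Ht).
  unfold Defs.rmeet in Ex. rewrite rdiv_top_l in Ex. symmetry. exact Ex.
Qed.

Lemma rdiv_diag x : rdiv x x = t.
Proof.
  apply le_antisym; [apply Ht |].
  apply residuation. rewrite mul_top_l. apply le_refl.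
Qed.

Lemma rmeet_le_r x y : le (rmeet x y) y.
Proof.
  apply (le_trans (mul t y)); [apply mul_le_mono_r, Ht |].
  rewrite mul_top_l. apply le_refl.
Qed.

Lemma list_lower_bound (l : list A) : exists b, forall x, In x l -> le b x.
Proof.
  induction l as [| a l [b Hb]].
  - exists t. intros x [].
  - exists (rmeet b a). intros x [<- | Hx].
    + apply rmeet_le_r.
    + apply (le_trans b); [apply rmeet_le_l | apply Hb, Hx].
Qed.

Lemma bottom_of_finite : finite_type A -> exists b, is_bottom le b.
Proof.
  intros [l Hl]. destruct (list_lower_bound l) as [b Hb].
  exists b. intro x. apply Hb, Hl.
Qed.

End WithTop.

End RightResiduatedMagma.

Theorem mainTheorem11 (A : Type) (le : A -> A -> Prop) (mul rdiv : A -> A -> A)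
  (HA : right_residuated_magma le mul rdiv) (HN : condN le mul rdiv) :
  (forall z : A, is_bottom le z -> is_top le (rdiv z z)) /\
  (forall t : A, is_top le t ->
     ((forall x y, rdiv x x = rdiv y y) /\
      (forall x, rdiv x x = t) /\
      (forall x, mul t x = x)) /\
     (forall x y, le (rmeet mul rdiv x y) x /\ le (rmeet mul rdiv x y) y) /\
     (finite_type A -> exists b : A, is_bottom le b)).
Proof.
  split; [exact (rdiv_bottom_is_top HA HN) |].
  intros t Ht. repeat split.
  - intros x y. rewrite (rdiv_diag HA HN Ht x), (rdiv_diag HA HN Ht y). reflexivity.
  - exact (rdiv_diag HA HN Ht).
  - exact (mul_top_l HA HN Ht).
  - apply rmeet_le_l, HA.
  - apply (rmeet_le_r HA HN Ht).
  - exact (bottom_of_finite HA HN Ht).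
Qed.
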